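(* Let $C=(1,c_2,c_3,c_4,c_5,c_6)=(1,c_2,2c_2-1,c_4,c_2+c_4-1,2c_4-1)$ be a system with $c_4\ge 3c_2-1$, and let $\ell=\lceil c_5/c_3\rceil$. Suppose $\mathrm{grd}_C(\ell c_3)=\ell c_3-c_5+1-\lfloor(\ell c_3-c_5)/c_2\rfloor(c_2-1)$ and $\mathrm{grd}_C(\ell c_3)\le\ell$. Then $C$ is canonical and the subsystem $(1,c_2,2c_2-1,c_4,c_2+c_4-1)$ is noncanonical.
   Context: A system is a tuple $C=(c_1,\dots,c_n)$ of integers with $1=c_1<c_2<\dots<c_n$; for $k\le n$, $(c_1,\dots,c_k)$ is a subsystem. For a positive integer $v$, $\mathrm{opt}_C(v)$ is the minimum of $\sum_i x_i$ over $x\in\mathbb{Z}_{\ge0}^n$ with $\sum_i c_ix_i=v$. The greedy representation of $v$ is produced by: for $i=n$ down to $1$, while $c_i\le$ remaining value, take a coin $c_i$. $\mathrm{grd}_C(v)$ is its number of coins. A positive integer $w$ is a counterexample if $\mathrm{opt}_C(w)<\mathrm{grd}_C(w)$; $C$ is canonical if it has none, noncanonical otherwise. *)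

From mathcomp Require Import all_boot.
Set Implicit Arguments. Unset Strict Implicit. Unset Printing Implicit Defensive.

Definition is_system (C : seq nat) : Prop :=
  head 0 C = 1 /\ sorted ltn C.

Definition is_repr (C : seq nat) (v : nat) (x : seq nat) : Prop :=
  size x = size C /\ \sum_(i < size C) nth 0 C i * nth 0 x i = v.

Definition is_opt (C : seq nat) (v m : nat) : Prop :=
  (exists x, is_repr C v x /\ sumn x = m) /\
  (forall x, is_repr C v x -> m <= sumn x).

(* Greedy on coins listed in decreasing order: with coin c, the loop
   "while c <= remaining, take a coin c" takes r %/ c coins and leaves r %% c. *)
Fixpoint grd_desc (D : seq nat) (r : nat) : nat :=
  match D with
  | [::] => 0
  | c :: D' => r %/ c + grd_desc D' (r %% c)
  end.

Definition grd (C : seq nat) (v : nat) : nat := grd_desc (rev C) v.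

Definition counterexample (C : seq nat) (w : nat) : Prop :=
  0 < w /\ exists m, is_opt C w m /\ m < grd C w.

Definition canonical (C : seq nat) : Prop :=
  forall w, ~ counterexample C w.

Definition noncanonical (C : seq nat) : Prop :=
  exists w, counterexample C w.

(* Write [c2 = A + 1] and [c4 = B + 1].  The coins are [1 + a * A + b * B]
   with [a + b <= 2], so the sums of [k] coins are exactly the numbers
   [k + x * A + y * B] with [x + y <= 2 * k].  The hypotheses on the greedy
   value at [l * c3] amount to [B = p * A + e] with [2 * e + 1 <= p]; trading
   [p] copies of [A] for one [B] then normalises any such sum to one with
   [x * A < B] and no more coins.  For a normalised sum, the greedy coin either
   leaves a remainder smaller than [k] or can be removed from the sum, so by
   induction greedy never uses more than [k] coins.  Without [c6], greedy
   pays [2 * c4] with [c5], [c3] and at least one more coin. *)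

From mathcomp Require Import all_boot zify.

Set Implicit Arguments.
Unset Strict Implicit.
Unset Printing Implicit Defensive.

Lemma grd_desc_cons_ltn D c r : r < c -> grd_desc (c :: D) r = grd_desc D r.
Proof. by move=> r_lt_c; rewrite /= divn_small // modn_small. Qed.

Lemma grd_desc_cons_leq D c r :
  0 < c <= r -> grd_desc (c :: D) r = (grd_desc (c :: D) (r - c)).+1.
Proof.
case/andP=> c_gt0 c_le_r; rewrite /= -{1 2}(subnK c_le_r).
by rewrite divnDr ?dvdnn // divnn c_gt0 modnDr addn1 addSn.
Qed.

(* The coin greedy takes next from the remainder [r]; [0] if none fits. *)
Definition grd_coin (D : seq nat) (r : nat) : nat :=
  nth 0 D (find (fun c => c <= r) D).

Lemma grd_desc_grd_coin D r :
  all (fun c => 0 < c) D -> has (fun c => c <= r) D ->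
  grd_desc D r = (grd_desc D (r - grd_coin D r)).+1.
Proof.
elim: D => [|c D IH] // /andP[c_gt0 D_pos].
case: (leqP c r) => [c_le_r _ | r_lt_c].
  have -> : grd_coin (c :: D) r = c by rewrite /grd_coin /= c_le_r.
  by rewrite grd_desc_cons_leq ?c_gt0.
case/orP=> [|D_r]; first by rewrite leqNgt r_lt_c.
have -> : grd_coin (c :: D) r = grd_coin D r by rewrite /grd_coin /= leqNgt r_lt_c.
rewrite !grd_desc_cons_ltn ?IH //.
exact: leq_ltn_trans (leq_subr _ _) r_lt_c.
Qed.

Lemma grd_desc0 D : grd_desc D 0 = 0.
Proof. by elim: D => //= c D IH; rewrite div0n mod0n IH. Qed.

Lemma grd_desc_gt0 D r :
  all (fun c => 0 < c) D -> has (fun c => c <= r) D -> 0 < grd_desc D r.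
Proof. by move=> D_pos D_r; rewrite grd_desc_grd_coin. Qed.

Lemma is_repr_leq_mul_sumn C v x M :
  all (fun c => c <= M) C -> is_repr C v x -> v <= M * sumn x.
Proof.
move=> /allP C_le [size_x <-].
rewrite sumnE (big_nth 0) big_mkord size_x big_distrr.
by apply: leq_sum => i _; rewrite leq_mul2r orbC C_le ?mem_nth.
Qed.

Lemma muln_cases m d :
  m = 0 /\ m * d = 0 \/ m = 1 /\ m * d = d \/ 1 < m /\ 2 * d <= m * d.
Proof.
case: m => [|[|m]]; [by left | by right; left; rewrite mul1n | right; right].
by rewrite leq_mul2r orbC.
Qed.

Section CoinSystem.

Variables A B : nat.
Hypothesis A_gt0 : 0 < A.
Hypothesis B_gt : 2 * A < B.

Definition coins : seq nat := [:: 1; A.+1; (2 * A).+1; B.+1; (A + B).+1; (2 * B).+1].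

Definition coin_sum (k w : nat) : Prop :=
  exists x y, w = k + x * A + y * B /\ x + y <= 2 * k.

Lemma coin_sum_of_repr w x : is_repr coins w x -> coin_sum (sumn x) w.
Proof.
case=> + <-; case: x => [|x1 [|x2 [|x3 [|x4 [|x5 [|x6 [|]]]]]]] // _.
rewrite /= !big_ord_recl big_ord0 /=.
by exists (x2 + 2 * x3 + x5), (x4 + x5 + 2 * x6); split; lia.
Qed.

Lemma coin_sum_refl w : coin_sum w w.
Proof. by exists 0, 0; split; lia. Qed.

(* Trading [p] copies of [A] for one [B] lowers [k] by [e] and [x + y] by
   [p - 1 >= 2 * e]. *)
Lemma coin_sum_reduce p e k x y :
  B = p * A + e -> 2 * e + 1 <= p -> x + y <= 2 * k ->
  exists k' x' y', [/\ k' <= k, k + x * A + y * B = k' + x' * A + y' * B,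
                       x' + y' <= 2 * k' & x' * A < B].
Proof.
move=> B_def pe_le; elim/ltn_ind: x k y => x IH k y xy_le.
case: (ltnP x p) => [x_lt_p | p_le_x].
  exists k, x, y; split=> //; rewrite B_def.
  by apply: leq_trans (leq_addr _ _); rewrite ltn_mul2r A_gt0.
have x_split : x * A = (x - p) * A + p * A by rewrite -mulnDl subnK.
have [k' [x' [y' [k'_le eq_w xy'_le x'A_lt]]]] :=
  IH (x - p) ltac:(lia) (k - e) y.+1 ltac:(lia).
by exists k', x', y'; split; rewrite -?eq_w ?mulSn; lia.
Qed.

Lemma coin_sum_sub_grd_coin k x y w :
  0 < k -> x + y <= 2 * k -> x * A < B -> w = k + x * A + y * B ->
  exists2 k', k' < k & coin_sum k' (w - grd_coin (rev coins) w).
Proof.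
move=> k_gt0 xy_le xA_lt w_def.
have sum_small r : r < k -> exists2 k', k' < k & coin_sum k' r.
  by move=> r_lt; exists r => //; apply: coin_sum_refl.
have sum_coin a b c : c = 1 + a * A + b * B -> a <= x -> b <= y ->
    x + y <= 2 * k.-1 + a + b -> exists2 k', k' < k & coin_sum k' (w - c).
  move=> -> a_le b_le xy_le'; exists k.-1; first lia.
  exists (x - a), (y - b); split; last lia.
  have := leq_mul a_le (leqnn A); have := leq_mul b_le (leqnn B).
  by rewrite w_def !mulnBl; lia.
have := muln_cases x A; have := muln_cases y B => yB xA.
rewrite /grd_coin /=.
case: (leqP (2 * B).+1 w) => [w6|w6] /=.
  case: (leqP 2 y) => y2; first by apply: (sum_coin 0 2) => //; lia.
  by apply: sum_small; lia.
case: (leqP (A + B).+1 w) => [w5|w5] /=.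
  case: (posnP x) => x0; first by apply: sum_small; lia.
  case: (ltnP y 1) => y1; first by apply: sum_small; lia.
  by apply: (sum_coin 1 1) => //; lia.
case: (leqP B.+1 w) => [w4|w4] /=; first by apply: sum_small; lia.
case: (leqP (2 * A).+1 w) => [w3|w3] /=.
  case: (ltnP x 2) => x2; first by apply: sum_small; lia.
  by apply: (sum_coin 2 0) => //; lia.
case: (leqP A.+1 w) => [w2|w2] /=; first by apply: sum_small; lia.
by rewrite (_ : 0 < w) /=; [apply: sum_small | ]; lia.
Qed.

Lemma grd_coins_le p e k w :
  B = p * A + e -> 2 * e + 1 <= p -> coin_sum k w -> grd coins w <= k.
Proof.
move=> B_def pe_le; elim/ltn_ind: k w => k IH w [x [y [w_def xy_le]]].
have [k' [x' [y' [k'_le w_def' xy'_le x'A_lt]]]] := coin_sum_reduce B_def pe_le xy_le.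
rewrite w_def' in w_def; case: (posnP w) => [-> | w_gt0]; first by rewrite /grd grd_desc0.
have k'_gt0 : 0 < k' by have := muln_cases x' A; have := muln_cases y' B; lia.
have [k'' k''_lt w_sub] := coin_sum_sub_grd_coin k'_gt0 xy'_le x'A_lt w_def.
rewrite /grd grd_desc_grd_coin; [| by [] | by rewrite /= w_gt0 !orbT].
have k''_lt_k := leq_trans k''_lt k'_le.
exact: leq_ltn_trans (IH k'' k''_lt_k _ w_sub) k''_lt_k.
Qed.

Lemma coins_canonical p e : B = p * A + e -> 2 * e + 1 <= p -> canonical coins.
Proof.
move=> B_def pe_le w [_ [m [[[x [x_repr <-]] _] lt_grd]]].
by have := grd_coins_le B_def pe_le (coin_sum_of_repr x_repr); rewrite leqNgt lt_grd.
Qed.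

End CoinSystem.

Lemma take5_coins_noncanonical A B :
  0 < A -> 3 * A < B -> noncanonical (take 5 (coins A B)).
Proof.
move=> A_gt0 B_gt3; exists (2 * B.+1); split=> //; exists 2; split; last first.
  rewrite /grd [rev _]/= grd_desc_cons_leq; last lia.
  rewrite grd_desc_cons_ltn; last lia.
  rewrite grd_desc_cons_ltn; last lia.
  rewrite grd_desc_cons_leq; last lia.
  by rewrite ltnS ltnS grd_desc_gt0 //= (_ : 0 < _) ?orbT; lia.
split.
  by exists [:: 0; 0; 0; 2; 0]; split=> //; split=> //; rewrite !big_ord_recl big_ord0 /=; lia.
move=> x x_repr; have := is_repr_leq_mul_sumn (M := (A + B).+1) _ x_repr.
have := muln_cases (sumn x) (A + B).+1; rewrite /=; lia.
Qed.

Lemma decomposition_of_grd_bound A B l g :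
  (A + B).+1 <= l * (2 * A).+1 ->
  let r := l * (2 * A).+1 - (A + B).+1 in
  g = r + 1 - r %/ A.+1 * A -> g <= l ->
  exists p e, B = p * A + e /\ 2 * e + 1 <= p.
Proof.
move=> sum_le r g_def g_le.
(* With [r = q * (A + 1) + s]: [g = q + s + 1], [p = 2 * l - 1 - q], [e = l - 1 - q - s]. *)
have r_def := divn_eq r A.+1.
set q := r %/ A.+1 in g_def r_def; set s := r %% A.+1 in r_def.
have g_eq : g = q + s + 1 by move: g_def r_def; rewrite mulnS; lia.
exists (2 * l - 1 - q), (l - 1 - q - s); split; last lia.
have p_eq : 2 * l - 1 - q + q + 1 = 2 * l by lia.
have := congr1 (muln^~ A) p_eq; rewrite !mulnDl mul1n.
move: r_def; rewrite /r mulnS mulnCA; lia.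
Qed.

Theorem lemma12 (c2 c4 : nat) :
  let c3 := 2 * c2 - 1 in
  let c5 := c2 + c4 - 1 in
  let c6 := 2 * c4 - 1 in
  let C := [:: 1; c2; c3; c4; c5; c6] in
  let l := (c5 + c3 - 1) %/ c3 in (* l = ceil (c5 / c3) *)
  is_system C ->
  3 * c2 - 1 <= c4 ->
  grd C (l * c3) = (l * c3 - c5 + 1) - ((l * c3 - c5) %/ c2) * (c2 - 1) ->
  grd C (l * c3) <= l ->
  canonical C /\ noncanonical (take 5 C).
Proof.
move=> c3 c5 c6 C l; rewrite {}/l {}/C {}/c6 {}/c5 {}/c3.
case: c2 => [|A]; first by case=> _ /andP[].
case: c4 => [|B]; first by move=> _; lia.
have -> : 2 * A.+1 - 1 = (2 * A).+1 by lia.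
have -> : A.+1 + B.+1 - 1 = (A + B).+1 by lia.
have -> : 2 * B.+1 - 1 = (2 * B).+1 by lia.
have -> : A.+1 - 1 = A by lia.
move=> [_ /andP[A_gt0 _]] B_ge grd_eq grd_le.
set l := _ %/ _ in grd_eq grd_le.
have sum_le : (A + B).+1 <= l * (2 * A).+1.
  by have := ltn_ceil ((A + B).+1 + (2 * A).+1 - 1) (ltn0Sn (2 * A)); lia.
have [p [e [B_def pe_le]]] := decomposition_of_grd_bound sum_le grd_eq grd_le.
split; [apply: coins_canonical B_def pe_le | apply: take5_coins_noncanonical]; lia.
Qed.
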